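(* Let $n\ge2$ with prime factorization $n=p_1\cdots p_m$. Then the complete graph $K_n$ factors as $K_n\cong K_{p_1}\cdot\,\cdots\,\cdot K_{p_m}$ in the Zykov product, and this is the unique factorization of $K_n$ into Zykov-multiplicative primes, up to order and isomorphism of the factors.
   Context: For $G=(V,E)$, $H=(W,F)$, the Zykov product $G\cdot H$ has vertex set $V\times W$, with $(a,b)$ and $(c,d)$ adjacent iff $\{a,c\}\in E$ or $\{b,d\}\in F$; its unit is $K_1$. A finite simple graph $P\not\cong K_1$, nonempty, is a Zykov-multiplicative prime if $P\cong A\cdot B$ implies $A\cong K_1$ or $B\cong K_1$. *)

From mathcomp Require Import all_boot.
Set Implicit Arguments. Unset Strict Implicit. Unset Printing Implicit Defensive.

Record graph : Type := Graph {
  vert : finType;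
  adj : rel vert;
  adj_sym : symmetric adj;
  adj_irr : irreflexive adj
}.

Definition giso (G H : graph) : Prop :=
  exists f : vert G -> vert H,
    bijective f /\ forall x y, @adj H (f x) (f y) = @adj G x y.

Definition complete_adj (n : nat) : rel 'I_n := fun i j => i != j.
Lemma complete_sym (n : nat) : symmetric (@complete_adj n).
Proof. by move=> i j; rewrite /complete_adj eq_sym. Qed.
Lemma complete_irr (n : nat) : irreflexive (@complete_adj n).
Proof. by move=> i; rewrite /complete_adj eqxx. Qed.
Definition complete (n : nat) : graph :=
  @Graph 'I_n (@complete_adj n) (@complete_sym n) (@complete_irr n).

Definition K1 : graph := complete 1.

Section Zykov.
Variables G H : graph.
Definition zykov_adj : rel (vert G * vert H) :=
  fun u v => @adj G u.1 v.1 || @adj H u.2 v.2.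
Lemma zykov_sym : symmetric zykov_adj.
Proof. by move=> u v; rewrite /zykov_adj (@adj_sym G) (@adj_sym H). Qed.
Lemma zykov_irr : irreflexive zykov_adj.
Proof. by move=> u; rewrite /zykov_adj !adj_irr. Qed.
Definition zykov : graph :=
  @Graph (vert G * vert H)%type zykov_adj zykov_sym zykov_irr.
End Zykov.

Definition zykov_list (gs : seq graph) : graph := foldr zykov K1 gs.

Definition zprime (P : graph) : Prop :=
  ~ giso P K1 /\ 0 < #|vert P| /\
  forall A B : graph, giso P (zykov A B) -> giso A K1 \/ giso B K1.

From mathcomp Require Import all_boot.
Set Implicit Arguments. Unset Strict Implicit. Unset Printing Implicit Defensive.

(* In a Zykov product of complete graphs two vertices are non-adjacent only if
   they agree in every coordinate, so the product is again complete, on the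
   product of the vertex sets; hence K_n = K_(p_1) . ... . K_(p_m).  Conversely,
   restricting a complete A . B to a fibre {a} x B shows that every factor of a
   complete graph is complete.  A complete prime factor K_k must have k prime,
   since K_(d e) = K_d . K_e, so the orders of the prime factors of K_n form a
   prime factorization of n; it is unique in the integers, and complete graphs
   of equal order are isomorphic. *)

Definition is_complete (G : graph) : Prop := forall x y : vert G, @adj G x y = (x != y).

Lemma giso_card (G H : graph) : giso G H -> #|vert G| = #|vert H|.
Proof. by case=> f [f_bij _]; apply: bij_eq_card f_bij. Qed.

Lemma is_complete_giso (G H : graph) : is_complete G -> giso G H -> is_complete H.
Proof.
move=> cG [f [f_bij f_adj]]; case: (f_bij) => g fK gK x y.
by rewrite -(gK x) -(gK y) f_adj cG (inj_eq (can_inj fK)).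
Qed.

Lemma giso_complete (G H : graph) :
  is_complete G -> is_complete H -> #|vert G| = #|vert H| -> giso G H.
Proof.
move=> cG cH eGH.
pose f (x : vert G) : vert H := enum_val (cast_ord eGH (enum_rank x)).
have f_inj : injective f by move=> x y /enum_val_inj /cast_ord_inj /enum_rank_inj.
exists f; split; first by apply: (inj_card_bij f_inj); rewrite eGH.
by move=> x y; rewrite cG cH (inj_eq f_inj).
Qed.

Lemma is_complete_zykov (G H : graph) :
  is_complete G -> is_complete H -> is_complete (zykov G H).
Proof.
move=> cG cH [a b] [c d]; rewrite /= /zykov_adj /= cG cH.
by rewrite xpair_eqE negb_and.
Qed.

Lemma is_complete_zykovl (G H : graph) (y : vert H) :
  is_complete (zykov G H) -> is_complete G.
Proof.
move=> cGH a b; have := cGH (a, y) (b, y).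
by rewrite /= /zykov_adj /= adj_irr orbF xpair_eqE eqxx andbT.
Qed.

Lemma is_complete_zykovr (G H : graph) (x : vert G) :
  is_complete (zykov G H) -> is_complete H.
Proof.
move=> cGH a b; have := cGH (x, a) (x, b).
by rewrite /= /zykov_adj /= adj_irr xpair_eqE eqxx.
Qed.

Lemma card_zykov_list (gs : seq graph) :
  #|vert (zykov_list gs)| = \prod_(g <- gs) #|vert g|.
Proof.
elim: gs => [|g gs IH]; first by rewrite big_nil card_ord.
by rewrite big_cons card_prod IH.
Qed.

Lemma is_complete_zykov_list (gs : seq graph) :
  (forall i, i < size gs -> is_complete (nth K1 gs i)) -> is_complete (zykov_list gs).
Proof.
elim: gs => [|g gs IH] cgs //=.
by apply: is_complete_zykov; [apply: (cgs 0) | apply: IH => i; apply: (cgs i.+1)].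
Qed.

Lemma is_complete_nth_zykov_list (gs : seq graph) i :
  0 < #|vert (zykov_list gs)| -> is_complete (zykov_list gs) ->
  i < size gs -> is_complete (nth K1 gs i).
Proof.
elim: gs i => [|g gs IH] // [|i] /=; rewrite card_prod muln_gt0 => /andP[g_gt0 gs_gt0] cgs.
- by case/card_gt0P: gs_gt0 => y _ _; apply: is_complete_zykovl cgs.
- rewrite ltnS; apply: IH gs_gt0 _.
  by case/card_gt0P: g_gt0 => x _; apply: is_complete_zykovr cgs.
Qed.

Lemma prime_card_zprime (G : graph) : is_complete G -> zprime G -> prime #|vert G|.
Proof.
move=> cG [notK1 [G_gt0 irrG]]; set k := #|vert G|; apply/primeP; split.
  rewrite ltn_neqAle G_gt0 andbT; apply/eqP => k1; apply: notK1.
  by apply: giso_complete; rewrite // card_ord.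
move=> d d_dvd; have: giso G (zykov (complete d) (complete (k %/ d))).
  apply: giso_complete => //; first exact: is_complete_zykov.
  by rewrite card_prod !card_ord mulnC divnK.
case/irrG => /giso_card; rewrite !card_ord; [by move-> | move=> kd1].
by rewrite /= -(divnK d_dvd) kd1 mul1n eqxx orbT.
Qed.

Lemma logn_prod_primes (s : seq nat) p :
  all prime s -> prime p -> logn p (\prod_(q <- s) q) = count_mem p s.
Proof.
move=> + p_pr; elim: s => [|q s IH] /=; first by rewrite big_nil logn1.
case/andP=> q_pr s_pr; have s_gt0 : 0 < \prod_(r <- s) r.
  by rewrite big_seq prodn_cond_gt0 // => r /(allP s_pr)/prime_gt0.
by rewrite big_cons (lognM _ (prime_gt0 q_pr) s_gt0) logn_prime // IH // eq_sym.
Qed.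

Lemma perm_eq_prod_primes (s t : seq nat) :
  all prime s -> all prime t -> \prod_(p <- s) p = \prod_(p <- t) p -> perm_eq s t.
Proof.
move=> s_pr t_pr st; apply/allP => p _; apply/eqP.
have [p_pr | p_npr] := boolP (prime p); first by rewrite -!logn_prod_primes // st.
have notin (u : seq nat) : all prime u -> p \notin u.
  by move=> u_pr; apply: contra p_npr => /(allP u_pr).
by rewrite !(count_memPn (notin _ _)).
Qed.

Lemma perm_eq_map_index (T : Type) (U : eqType) (F : T -> U) (x0 : T) (y0 : U)
    (u : seq T) (t : seq U) :
  perm_eq (map F u) t ->
  exists f : 'I_(size u) -> 'I_(size t),
    bijective f /\ forall i : 'I_(size u), F (nth x0 u i) = nth y0 t (f i).
Proof.
case/(perm_iotaP y0) => Is Is_perm Fu.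
have size_Is : size Is = size u by rewrite -(size_map (nth y0 t)) -Fu size_map.
have Is_lt (i : 'I_(size u)) : nth 0 Is i < size t.
  have: nth 0 Is i \in iota 0 (size t) by rewrite -(perm_mem Is_perm) mem_nth ?size_Is.
  by rewrite mem_iota.
pose f i := Ordinal (Is_lt i).
have f_inj : injective f.
  move=> i j /(congr1 val) /= /eqP.
  by rewrite nth_uniq ?size_Is ?(perm_uniq Is_perm) ?iota_uniq // => /eqP/val_inj.
exists f; split.
  by apply: (inj_card_bij f_inj); rewrite !card_ord -size_Is (perm_size Is_perm) size_iota.
by move=> i; rewrite -(nth_map x0 (F x0)) // Fu (nth_map 0) ?size_Is.
Qed.

Theorem mainTheorem10 (n : nat) (ps : seq nat) :
  2 <= n -> all prime ps -> \prod_(p <- ps) p = n ->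
  giso (complete n) (zykov_list (map complete ps)) /\
  (forall gs : seq graph,
     (forall i, i < size gs -> zprime (nth K1 gs i)) ->
     giso (complete n) (zykov_list gs) ->
     exists f : 'I_(size gs) -> 'I_(size ps),
       bijective f /\
       forall i : 'I_(size gs), giso (nth K1 gs i) (complete (nth 0 ps (f i)))).
Proof.
move=> n_ge2 ps_pr ps_prod; split.
  apply: giso_complete => //.
  - by apply: is_complete_zykov_list => i; rewrite size_map => lt_i; rewrite (nth_map 0).
  - rewrite card_ord card_zykov_list big_map -ps_prod.
    by apply: eq_bigr => p _; rewrite card_ord.
move=> gs gs_zprime Kn_gs.
have card_gs : #|vert (zykov_list gs)| = n by rewrite -(giso_card Kn_gs) card_ord.
have cgs i : i < size gs -> is_complete (nth K1 gs i).
  apply: is_complete_nth_zykov_list (is_complete_giso _ Kn_gs) => //.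
  by rewrite card_gs ltnW.
have orders_prime : all prime (map (fun g => #|vert g|) gs).
  rewrite all_map; apply/(all_nthP K1) => i lt_i.
  by apply: prime_card_zprime; [exact: cgs | exact: gs_zprime].
have /(perm_eq_map_index K1 0) [f [f_bij f_card]] :
    perm_eq (map (fun g => #|vert g|) gs) ps.
  by apply: perm_eq_prod_primes; rewrite // big_map -card_zykov_list card_gs.
exists f; split=> // i; apply: giso_complete => //; first exact: cgs.
by rewrite card_ord f_card.
Qed.
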